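(* (Sufficiency) Let $f(\underline{X})=\sum_{\ell=1}^{L}\prod_{i=1}^{n} f_i^{(\ell)}(X_i)$ with arbitrary real functions $f_i^{(\ell)}$. If for every $i\in[n]$ and $\ell\in[L]$ the encoding of source $i$ perfectly secures $f_i^{(\ell)}(X_i)$, i.e. $\mathbb{E}[f_i^{(\ell)}(X_i)\mid g_i(X_i,K_i)]=\mathbb{E}[f_i^{(\ell)}(X_i)]$ for every observed value, then $f(\underline{X})$ is perfectly secured, i.e. $\mathbb{E}[f(\underline{X})\mid g(\underline{X})]=\mathbb{E}[f(\underline{X})]$ for every observed value. (Necessity) Suppose either (1) $f(\underline{X})=\sum_{i=1}^n f_i(X_i)$, or (2) $f(\underline{X})=\prod_{i=1}^n f_i(X_i)$ with $\prod_{i=1}^n\mathbb{E}[f_i(X_i)]\cdot\mathrm{var}[f_i(X_i)]\neq 0$. Then for any encoding scheme under which the receiver computes $f(\underline{X})$ exactly and $f(\underline{X})$ is perfectly secured, each $f_i(X_i)$ is recoverable by the receiver from $g_i(X_i,K_i)$ and $K_i$, and each $f_i(X_i)$ is perfectly secured, i.e. $\mathbb{E}[f_i(X_i)\mid g_i(X_i,K_i)]=\mathbb{E}[f_i(X_i)]$ for every observed value.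
   Context: Multi-source setting: $n$ sources; source $i$ produces $X_i$ from a finite alphabet $\mathcal{X}_i$, with $X_1,\dots,X_n$ mutually independent. Source $i$ shares a key $K_i$ uniform on $\{1,\dots,2^{k_i}\}$ with the receiver only; keys are independent of each other and of the sources. Source $i$ transmits $g_i(X_i,K_i)$, where for each key value the map $x\mapsto g_i(x,K_i)$ is such that the receiver (knowing all keys) can compute the desired function $f:\prod_i\mathcal{X}_i\to\mathbb{R}$ exactly. The eavesdropper observes $g(\underline{X})=(g_1(X_1,K_1),\dots,g_n(X_n,K_n))$ but no keys. Her distortion is $D_{ach}=\min_{\hat f}\mathbb{E}[(f(\underline{X})-\hat f(g(\underline{X})))^2]$ over all estimators $\hat f$, and $D_{max}=\mathrm{var}(f(\underline{X}))$. A real function $h$ of the sources is called perfectly secured if the eavesdropper's minimum mean squared error for estimating $h$ from her observation equals $\mathrm{var}(h)$, equivalently $\mathbb{E}[h\mid \text{observation}]=\mathbb{E}[h]$ for every observed value. *)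

From HB Require Import structures.
From mathcomp Require Import all_boot all_order all_algebra.
Set Implicit Arguments. Unset Strict Implicit. Unset Printing Implicit Defensive.
Import Order.TTheory GRing.Theory Num.Theory.
Local Open Scope ring_scope.

Definition is_dist (R : numDomainType) (T : finType) (p : T -> R) : Prop :=
  (forall x, 0 <= p x) /\ \sum_x p x = 1.

Definition expect (R : numDomainType) (T : finType) (P : T -> R) (h : T -> R) : R :=
  \sum_w P w * h w.

Definition variance (R : numDomainType) (T : finType) (P : T -> R) (h : T -> R) : R :=
  expect P (fun w => (h w - expect P h) ^+ 2).

Definition perfectly_secured (R : numFieldType) (T : finType) (Y : eqType)
    (P : T -> R) (obs : T -> Y) (h : T -> R) : Prop :=
  forall y : Y, 0 < \sum_(w | obs w == y) P w ->
    (\sum_(w | obs w == y) P w * h w) / (\sum_(w | obs w == y) P w) = expect P h.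

(* n sources; source i has alphabet X i, distribution p i, key K_i uniform on
   'I_(2 ^ k i) (i.e. 2^(k_i) values), and encoder g i : X i -> key -> Y i. *)

Definition src_space (n : nat) (X : 'I_n -> finType) (k : 'I_n -> nat) (i : 'I_n)
  : finType := (X i * 'I_(2 ^ k i))%type.

Definition src_prob (R : numFieldType) (n : nat) (X : 'I_n -> finType) (k : 'I_n -> nat)
    (p : forall i, X i -> R) (i : 'I_n) (w : src_space X k i) : R :=
  p i w.1 / (2 ^ k i)%:R.

Definition src_obs (n : nat) (X : 'I_n -> finType) (k : 'I_n -> nat) (Y : 'I_n -> eqType)
    (g : forall i, X i -> 'I_(2 ^ k i) -> Y i) (i : 'I_n) (w : src_space X k i) : Y i :=
  g i w.1 w.2.

Definition joint_space (n : nat) (X : 'I_n -> finType) (k : 'I_n -> nat) : finType :=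
  {dffun forall i : 'I_n, src_space X k i}.

Definition joint_prob (R : numFieldType) (n : nat) (X : 'I_n -> finType) (k : 'I_n -> nat)
    (p : forall i, X i -> R) (w : joint_space X k) : R :=
  \prod_(i < n) src_prob p (w i).

Definition joint_obs (n : nat) (X : 'I_n -> finType) (k : 'I_n -> nat) (Y : 'I_n -> eqType)
    (g : forall i, X i -> 'I_(2 ^ k i) -> Y i) (w : joint_space X k)
  : {dffun forall i : 'I_n, Y i} :=
  [ffun i => src_obs g (w i)].

Definition joint_keys (n : nat) (X : 'I_n -> finType) (k : 'I_n -> nat) (w : joint_space X k)
  : {dffun forall i : 'I_n, 'I_(2 ^ k i)} :=
  [ffun i => (w i).2].

Definition joint_src (n : nat) (X : 'I_n -> finType) (k : 'I_n -> nat) (w : joint_space X k)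
  : forall i : 'I_n, X i :=
  fun i => (w i).1.

Definition receiver_computes (R : numFieldType) (n : nat) (X : 'I_n -> finType)
    (k : 'I_n -> nat) (Y : 'I_n -> eqType) (g : forall i, X i -> 'I_(2 ^ k i) -> Y i)
    (f : (forall i : 'I_n, X i) -> R) : Prop :=
  exists dec : {dffun forall i : 'I_n, 'I_(2 ^ k i)} -> {dffun forall i : 'I_n, Y i} -> R,
    forall w : joint_space X k, dec (joint_keys w) (joint_obs g w) = f (joint_src w).

Definition joint_secured (R : numFieldType) (n : nat) (X : 'I_n -> finType)
    (k : 'I_n -> nat) (Y : 'I_n -> eqType) (p : forall i, X i -> R)
    (g : forall i, X i -> 'I_(2 ^ k i) -> Y i) (f : (forall i : 'I_n, X i) -> R) : Prop :=
  perfectly_secured (joint_prob p) (joint_obs g) (fun w => f (joint_src w)).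

Definition src_secured (R : numFieldType) (n : nat) (X : 'I_n -> finType)
    (k : 'I_n -> nat) (Y : 'I_n -> eqType) (p : forall i, X i -> R)
    (g : forall i, X i -> 'I_(2 ^ k i) -> Y i) (i : 'I_n) (h : X i -> R) : Prop :=
  perfectly_secured (@src_prob R n X k p i) (@src_obs n X k Y g i) (fun w => h w.1).

Definition src_recoverable (R : numFieldType) (n : nat) (X : 'I_n -> finType)
    (k : 'I_n -> nat) (Y : 'I_n -> eqType)
    (g : forall i, X i -> 'I_(2 ^ k i) -> Y i) (i : 'I_n) (h : X i -> R) : Prop :=
  exists d : 'I_(2 ^ k i) -> Y i -> R, forall (x : X i) (key : 'I_(2 ^ k i)), d key (g i x key) = h x.

Definition src_mean (R : numFieldType) (n : nat) (X : 'I_n -> finType)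
    (p : forall i, X i -> R) (i : 'I_n) (h : X i -> R) : R := expect (p i) h.
Definition src_var (R : numFieldType) (n : nat) (X : 'I_n -> finType)
    (p : forall i, X i -> R) (i : 'I_n) (h : X i -> R) : R := variance (p i) h.

From HB Require Import structures.
From mathcomp Require Import all_boot all_order all_algebra.
Import Order.TTheory GRing.Theory Num.Theory.
Local Open Scope ring_scope.

(* The eavesdropper's posterior mean of a product of per-source functions is the
   product of the per-source posterior means, because sources and keys are
   independent and the observation is componentwise.  Sufficiency follows by
   linearity.  For necessity, fix all sources but the i-th at positive-probability
   points: the posterior mean of f is the constant E[f], and it is the sum (resp.
   the product) of the per-source posterior means, so the i-th posterior mean of
   f_i is constant on positive-probability points; by the tower property that
   constant is E[f_i].  Recoverability follows the same way from the decoder of f,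
   fixing the other sources and keys. *)

Lemma sum_dffun_prod {R : comNzRingType} {I : finType} {T_ : I -> finType}
    (F : forall i, T_ i -> R) :
  \sum_(w : {dffun forall i, T_ i}) \prod_i F i (w i) = \prod_i \sum_(t : T_ i) F i t.
Proof.
have -> : \prod_i \sum_(t : T_ i) F i t =
          \prod_i \sum_(j in tagged_with T_ i) untag 0 [ffun t => F i t] j.
  apply: eq_bigr => i _; rewrite -(big_tag (fun i => [ffun t => F i t])).
  by under eq_bigr do rewrite ffunE.
rewrite bigA_distr_big_dep -(@big_fprod R 0 1 *%R +%R I T_ (fun i => [ffun t => F i t])).
rewrite (reindex (@dffun_of_fprod I T_)); last exact/onW_bij/dffun_of_fprod_bij.
by apply: eq_bigr => w _; apply: eq_bigr => i _; rewrite !ffunE.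
Qed.

Section FiniteProbability.
Context {R : numFieldType} {T : finType} {Y : eqType}.
Variables (P : T -> R) (obs : T -> Y).

Definition fiber_mass (y : Y) : R := \sum_(w | obs w == y) P w.

Definition cond_mean (h : T -> R) (y : Y) : R :=
  (\sum_(w | obs w == y) P w * h w) / fiber_mass y.

Lemma expect_sum (L : nat) (h : 'I_L -> T -> R) :
  expect P (fun w => \sum_l h l w) = \sum_l expect P (h l).
Proof. by rewrite /expect exchange_big; apply: eq_bigr => w _; rewrite mulr_sumr. Qed.

Lemma cond_mean_sum (L : nat) (h : 'I_L -> T -> R) y :
  cond_mean (fun w => \sum_l h l w) y = \sum_l cond_mean (h l) y.
Proof.
rewrite /cond_mean -mulr_suml exchange_big; congr (_ / _).
by apply: eq_bigr => w _; rewrite mulr_sumr.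
Qed.

Lemma eq_cond_mean (h1 h2 : T -> R) y : h1 =1 h2 -> cond_mean h1 y = cond_mean h2 y.
Proof. by move=> eq_h; rewrite /cond_mean; under eq_bigr do rewrite eq_h. Qed.

Lemma cond_mean_expr_bool (h : T -> R) (b : bool) y : fiber_mass y != 0 ->
  cond_mean (fun w => h w ^+ b) y = cond_mean h y ^+ b.
Proof.
move=> mass_nz; case: b; first by [].
by rewrite /cond_mean expr0; under eq_bigr do rewrite expr0 mulr1; rewrite divff.
Qed.

End FiniteProbability.

Section Positivity.
Context {R : numFieldType} {T : finType} {Y : eqType}.
Variables (P : T -> R) (obs : T -> Y).
Hypothesis P_ge0 : forall w, 0 <= P w.

Lemma fiber_mass_ge (w : T) : P w <= fiber_mass P obs (obs w).
Proof. by rewrite /fiber_mass (bigD1 w) //= lerDl sumr_ge0. Qed.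

Lemma fiber_mass_gt0 (w : T) : 0 < P w -> 0 < fiber_mass P obs (obs w).
Proof. by move=> /lt_le_trans; apply; apply: fiber_mass_ge. Qed.

(* Law of total expectation; fibers of mass 0 carry no probability, so the junk
   value x / 0 = 0 of [cond_mean] there is harmless. *)
Lemma expect_cond_mean (h : T -> R) :
  \sum_w P w * cond_mean P obs h (obs w) = expect P h.
Proof.
have fiber_weight t :
    \sum_(w | obs w == obs t) P w / fiber_mass P obs (obs w) * (P t * h t) = P t * h t.
  rewrite (eq_bigr (fun w => P w / fiber_mass P obs (obs t) * (P t * h t)));
    last by move=> w /eqP ->.
  rewrite -!mulr_suml -/(fiber_mass P obs (obs t)).
  have [mass0|mass_nz] := eqVneq (fiber_mass P obs (obs t)) 0; last by rewrite divff ?mul1r.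
  suff -> : P t = 0 by rewrite mul0r mulr0.
  by apply/le_anti; rewrite P_ge0 andbT -mass0 fiber_mass_ge.
transitivity (\sum_w \sum_t if obs t == obs w then
    P w / fiber_mass P obs (obs w) * (P t * h t) else 0).
  apply: eq_bigr => w _; rewrite /cond_mean mulrA mulrAC mulr_sumr big_mkcond /=.
  by apply: eq_bigr => t _; case: ifP; rewrite ?mulr0.
rewrite exchange_big /expect; apply: eq_bigr => t _.
rewrite -[RHS]fiber_weight [RHS]big_mkcond /=.
by apply: eq_bigr => w _; rewrite eq_sym.
Qed.

Lemma perfectly_secured_of_cond_mean_const (h : T -> R) : \sum_w P w = 1 ->
    (forall t t', 0 < P t -> 0 < P t' ->
       cond_mean P obs h (obs t) = cond_mean P obs h (obs t')) ->
  perfectly_secured P obs h.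
Proof.
move=> P_sum1 cst.
have [t0 /andP[_ Pt0]] : exists t0, true && (0 < P t0).
  by apply: psumr_neq0P => //; rewrite P_sum1; apply/eqP/oner_neq0.
have mean : expect P h = cond_mean P obs h (obs t0).
  rewrite -expect_cond_mean -[RHS]mul1r -P_sum1 mulr_suml; apply: eq_bigr => w _.
  have [Pw0|Pw_gt0] := eqVneq (P w) 0; first by rewrite Pw0 !mul0r.
  by rewrite (cst w t0) // lt_def Pw_gt0 P_ge0.
move=> y /lt0r_neq0/eqP mass_nz.
have [t /andP[/eqP <- Pt]] := psumr_neq0P (fun w _ => P_ge0 w) mass_nz.
by rewrite mean; apply: cst.
Qed.

End Positivity.

Section ProductSpace.
Context {R : numFieldType} {I : finType} {T_ : I -> finType} {Y_ : I -> eqType}.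
Variables (P_ : forall i, T_ i -> R) (obs_ : forall i, T_ i -> Y_ i).

Let prodP (w : {dffun forall i, T_ i}) : R := \prod_i P_ i (w i).
Let prod_obs (w : {dffun forall i, T_ i}) : {dffun forall i, Y_ i} :=
  finfun (fun i => obs_ i (w i)).

Lemma fiber_sum_prod (F : forall i, T_ i -> R) (y : {dffun forall i, Y_ i}) :
  \sum_(w | prod_obs w == y) \prod_i F i (w i) = \prod_i \sum_(t | obs_ i t == y i) F i t.
Proof.
under [RHS]eq_bigr do rewrite big_mkcond /=.
rewrite -sum_dffun_prod big_mkcond /=; apply: eq_bigr => w _.
have [/forallP obs_eq|/forallPn[i obs_neq]] := boolP [forall i, obs_ i (w i) == y i].
  have -> : prod_obs w == y by apply/eqP/ffunP => i; rewrite ffunE; apply/eqP/obs_eq.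
  by apply: eq_bigr => i _; rewrite obs_eq.
have -> : (prod_obs w == y) = false.
  by apply/negbTE; apply: contra obs_neq => /eqP <-; rewrite ffunE.
by rewrite (bigD1 i) //= (negbTE obs_neq) mul0r.
Qed.

Lemma fiber_mass_prod (y : {dffun forall i, Y_ i}) :
  fiber_mass prodP prod_obs y = \prod_i fiber_mass (P_ i) (obs_ i) (y i).
Proof. exact: fiber_sum_prod. Qed.

Lemma cond_mean_prod (h : forall i, T_ i -> R) (y : {dffun forall i, Y_ i}) :
  cond_mean prodP prod_obs (fun w => \prod_i h i (w i)) y =
  \prod_i cond_mean (P_ i) (obs_ i) (h i) (y i).
Proof.
rewrite /cond_mean fiber_mass_prod big_split prodfV /=.
rewrite -(fiber_sum_prod (fun i t => P_ i t * h i t)).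
by congr (_ / _); apply: eq_bigr => w _; rewrite big_split.
Qed.

Lemma expect_prod (h : forall i, T_ i -> R) :
  expect prodP (fun w => \prod_i h i (w i)) = \prod_i expect (P_ i) (h i).
Proof.
rewrite /expect -(sum_dffun_prod (fun i t => P_ i t * h i t)).
by apply: eq_bigr => w _; rewrite big_split.
Qed.

End ProductSpace.

Section CoordinateUpdate.
Context {I : finType} {T_ : I -> finType}.

Lemma big_dfwith {R : Type} {idx : R} (op : Monoid.com_law idx)
    (G : forall j, T_ j -> R) (w : {dffun forall j, T_ j}) (i : I) (t : T_ i) :
  \big[op/idx]_j G j (finfun (dfwith w t) j) =
  op (G i t) (\big[op/idx]_(j | j != i) G j (w j)).
Proof.
rewrite (bigD1 i) //= ffunE dfwith_in; congr (op _ _).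
by apply: eq_bigr => j ji; rewrite ffunE dfwith_out // eq_sym.
Qed.

Lemma ffun_dfwith {V_ : I -> Type} (F : forall j, T_ j -> V_ j)
    (w : {dffun forall j, T_ j}) (i : I) (t : T_ i) :
  [ffun j => F j (finfun (dfwith w t) j)] = finfun (dfwith (fun j => F j (w j)) (F i t)).
Proof.
apply/ffunP => j; rewrite !ffunE.
by case: dfwithP => [|j' ij]; rewrite ?dfwith_in ?dfwith_out.
Qed.

Lemma big_const_on_prod {R : Type} {idx : R} (op : Monoid.com_law idx)
    (A : forall j, pred (T_ j)) (G : forall j, T_ j -> R) (c : R) :
    (forall j, exists t, A j t) ->
    (forall w : {dffun forall j, T_ j}, (forall j, A j (w j)) ->
       \big[op/idx]_j G j (w j) = c) ->
  forall i, exists r, forall t : T_ i, A i t -> op (G i t) r = c.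
Proof.
move=> /fin_all_exists[w0 Aw0] cst i.
exists (\big[op/idx]_(j | j != i) G j (finfun w0 j)) => t Ait.
rewrite -big_dfwith cst // => j; rewrite ffunE.
by case: dfwithP => [|j' _]; rewrite ?ffunE.
Qed.

End CoordinateUpdate.

Section MultiSource.
Variables (R : realFieldType) (n : nat) (X : 'I_n -> finType) (k : 'I_n -> nat).
Variables (Y : 'I_n -> eqType) (p : forall i, X i -> R).
Variable (g : forall i, X i -> 'I_(2 ^ k i) -> Y i).
Hypothesis p_dist : forall i, is_dist (p i).

Local Notation srcP i := (@src_prob R n X k p i).
Local Notation src_mean_at i h t := (cond_mean (srcP i) (src_obs g (i:=i)) h (src_obs g t)).

Lemma src_prob_ge0 i (t : src_space X k i) : 0 <= srcP i t.
Proof. by rewrite /src_prob divr_ge0 // (p_dist i).1. Qed.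

Lemma expect_src_prob i (h : X i -> R) :
  expect (srcP i) (fun t => h t.1) = expect (p i) h.
Proof.
rewrite /expect -(pair_big predT predT (fun x key => srcP i (x, key) * h x)) /=.
apply: eq_bigr => x _; rewrite /src_prob /= sumr_const card_ord.
have key_nz : ((2 ^ k i)%:R : R) != 0 by rewrite pnatr_eq0 -lt0n expn_gt0.
by rewrite -[_ *+ _]mulr_natr mulrAC divfK.
Qed.

Lemma src_prob_sum1 i : \sum_(t : src_space X k i) srcP i t = 1.
Proof.
rewrite -(p_dist i).2; have := expect_src_prob i (fun _ => 1).
by rewrite /expect; under eq_bigr do rewrite mulr1; under [in RHS]eq_bigr do rewrite mulr1.
Qed.

Lemma exists_src_prob_gt0 i : exists t : src_space X k i, 0 < srcP i t.
Proof.
have [t /andP[_ Pt]] : exists t, true && (0 < srcP i t).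
  apply: psumr_neq0P => [t _|]; first exact: src_prob_ge0.
  by rewrite src_prob_sum1; apply/eqP/oner_neq0.
by exists t.
Qed.

Lemma joint_fiber_mass y :
  fiber_mass (joint_prob p) (joint_obs g) y =
  \prod_i fiber_mass (srcP i) (src_obs g (i:=i)) (y i).
Proof. exact: fiber_mass_prod. Qed.

Lemma joint_cond_mean_prod (F : forall i, X i -> R) y :
  cond_mean (joint_prob p) (joint_obs g)
    (fun w : joint_space X k => \prod_i F i (joint_src w i)) y =
  \prod_i cond_mean (srcP i) (src_obs g (i:=i)) (fun t => F i t.1) (y i).
Proof. exact: (cond_mean_prod _ _ (fun i t => F i t.1)). Qed.

Lemma joint_expect_prod (F : forall i, X i -> R) :
  expect (joint_prob p) (fun w : joint_space X k => \prod_i F i (joint_src w i)) =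
  \prod_i expect (p i) (F i).
Proof.
rewrite (expect_prod _ (fun i t => F i t.1)).
by apply: eq_bigr => i _; apply: expect_src_prob.
Qed.

Lemma joint_secured_sum_prod (L : nat) (F : 'I_L -> forall i, X i -> R) :
    (forall i l, src_secured p g (F l i)) ->
  joint_secured p g (fun x => \sum_(l < L) \prod_(i < n) F l i (x i)).
Proof.
move=> secured y mass_gt0.
have src_mass_gt0 i : 0 < fiber_mass (srcP i) (src_obs g (i:=i)) (y i).
  rewrite lt_def sumr_ge0 ?andbT => [|t _]; last exact: src_prob_ge0.
  move: (lt0r_neq0 mass_gt0); rewrite -[\sum_(w | _) _]/(fiber_mass _ _ y).
  by rewrite joint_fiber_mass prodf_seq_neq0 => /allP/(_ i (mem_index_enum i)).
pose f (w : joint_space X k) := \sum_(l < L) \prod_(i < n) F l i (joint_src w i).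
change (cond_mean (joint_prob p) (joint_obs g) f y = expect (joint_prob p) f).
rewrite cond_mean_sum expect_sum; apply: eq_bigr => l _.
rewrite joint_cond_mean_prod joint_expect_prod; apply: eq_bigr => i _.
by rewrite -expect_src_prob; apply: (secured i l (y i)); apply: src_mass_gt0.
Qed.

Lemma joint_prob_fiber_gt0 (w : joint_space X k) : (forall i, 0 < srcP i (w i)) ->
  0 < fiber_mass (joint_prob p) (joint_obs g) (joint_obs g w).
Proof.
move=> w_gt0; rewrite joint_fiber_mass; apply: prodr_gt0 => i _.
by rewrite ffunE; apply: fiber_mass_gt0 => // t; apply: src_prob_ge0.
Qed.

Lemma exists_joint_gt0 : exists w : joint_space X k, forall j, 0 < srcP j (w j).
Proof.
have [w0 w0_gt0] := fin_all_exists exists_src_prob_gt0.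
by exists (finfun w0) => j; rewrite ffunE.
Qed.

Lemma joint_secured_at (f : (forall i, X i) -> R) (w : joint_space X k) :
    joint_secured p g f -> (forall j, 0 < srcP j (w j)) ->
  cond_mean (joint_prob p) (joint_obs g) (fun w' => f (joint_src w')) (joint_obs g w) =
  expect (joint_prob p) (fun w' : joint_space X k => f (joint_src w')).
Proof. by move=> secured /joint_prob_fiber_gt0; apply: secured. Qed.

Lemma joint_cond_mean_coord (F : forall i, X i -> R) j (w : joint_space X k) :
    (forall l, 0 < srcP l (w l)) ->
  cond_mean (joint_prob p) (joint_obs g) (fun w' => F j (joint_src w' j)) (joint_obs g w) =
  src_mean_at j (fun t => F j t.1) (w j).
Proof.
move=> w_gt0.
(* A function of source j alone is the product over l of [F l ^+ (l == j)]. *)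
have single (G : 'I_n -> R) : \prod_l G l ^+ (l == j) = G j.
  by rewrite (bigD1 j) //= eqxx big1 ?mulr1 // => l /negbTE ->.
rewrite (eq_cond_mean _ _ _ (fun w' => \prod_l F l (joint_src w' l) ^+ (l == j)));
  last by move=> w'; rewrite single.
rewrite (joint_cond_mean_prod (fun l x => F l x ^+ (l == j))).
rewrite -[RHS](single (fun l => src_mean_at l (fun t => F l t.1) (w l))).
apply: eq_bigr => l _; rewrite ffunE cond_mean_expr_bool //.
by apply: lt0r_neq0; apply: fiber_mass_gt0 => // t; apply: src_prob_ge0.
Qed.

Lemma src_secured_of_mean_const i (h : X i -> R) :
    (forall t t', 0 < srcP i t -> 0 < srcP i t' ->
       src_mean_at i (fun s => h s.1) t = src_mean_at i (fun s => h s.1) t') ->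
  src_secured p g h.
Proof.
apply: perfectly_secured_of_cond_mean_const; [exact: src_prob_ge0|exact: src_prob_sum1].
Qed.

Lemma src_secured_of_joint_sum (fi : forall i, X i -> R) :
    joint_secured p g (fun x => \sum_(i < n) fi i (x i)) ->
  forall i, src_secured p g (fi i).
Proof.
move=> secured i.
have [|r mean_r] := big_const_on_prod +%R (fun j t => 0 < srcP j t)
  (fun j t => src_mean_at j (fun s => fi j s.1) t)
  (expect (joint_prob p) (fun w : joint_space X k => \sum_(j < n) fi j (joint_src w j)))
  exists_src_prob_gt0 _ i.
  move=> w w_gt0; rewrite -(joint_secured_at _ w secured w_gt0) cond_mean_sum.
  by apply: eq_bigr => j _; rewrite joint_cond_mean_coord.
apply: src_secured_of_mean_const => t t' Pt Pt'.
by apply: (addIr r); rewrite !mean_r.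
Qed.

Lemma src_secured_of_joint_prod (fi : forall i, X i -> R) :
    \prod_i expect (p i) (fi i) != 0 ->
    joint_secured p g (fun x => \prod_(i < n) fi i (x i)) ->
  forall i, src_secured p g (fi i).
Proof.
move=> mean_nz secured i.
have [|r mean_r] := big_const_on_prod *%R (fun j t => 0 < srcP j t)
  (fun j t => src_mean_at j (fun s => fi j s.1) t)
  (expect (joint_prob p) (fun w : joint_space X k => \prod_(j < n) fi j (joint_src w j)))
  exists_src_prob_gt0 _ i.
  move=> w w_gt0; rewrite -(joint_secured_at _ w secured w_gt0) joint_cond_mean_prod.
  by apply: eq_bigr => j _; rewrite ffunE.
have [t0 Pt0] := exists_src_prob_gt0 i.
have r_nz : r != 0.
  apply: contra mean_nz => /eqP r0.
  by rewrite -joint_expect_prod -(mean_r t0) //= r0 mulr0.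
apply: src_secured_of_mean_const => t t' Pt Pt'.
by apply: (mulIf r_nz); rewrite !mean_r.
Qed.

Lemma decode_dfwith (f : (forall i, X i) -> R) dec :
    (forall w, dec (joint_keys w) (joint_obs g w) = f (joint_src w)) ->
  forall (w0 : joint_space X k) i (x : X i) key,
  dec (finfun (dfwith (fun j => (w0 j).2) key))
      (finfun (dfwith (fun j => src_obs g (w0 j)) (g i x key))) =
  f (joint_src (finfun (dfwith w0 ((x, key) : src_space X k i)))).
Proof.
move=> dec_f w0 i x key; rewrite -dec_f.
rewrite /joint_keys (ffun_dfwith (fun j (s : src_space X k j) => s.2)).
by rewrite /joint_obs (ffun_dfwith (fun j => src_obs g (i:=j))).
Qed.

Lemma src_recoverable_of_sum (fi : forall i, X i -> R) :
    receiver_computes g (fun x => \sum_(i < n) fi i (x i)) ->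
  forall i, src_recoverable g (fi i).
Proof.
move=> [dec dec_f] i; have [w0 _] := exists_joint_gt0.
exists (fun key y => dec (finfun (dfwith (fun j => (w0 j).2) key))
  (finfun (dfwith (fun j => src_obs g (w0 j)) y)) - \sum_(j | j != i) fi j (w0 j).1).
move=> x key; rewrite (decode_dfwith (fun x => \sum_(j < n) fi j (x j)) _ dec_f).
rewrite /joint_src.
by rewrite (big_dfwith _ (fun j s => fi j s.1)) addrK.
Qed.

Lemma src_recoverable_of_prod (fi : forall i, X i -> R) :
    \prod_i expect (p i) (fi i) != 0 ->
    receiver_computes g (fun x => \prod_(i < n) fi i (x i)) ->
  forall i, src_recoverable g (fi i).
Proof.
move=> mean_nz [dec dec_f] i.
have [w1 w1_nz] : exists w1 : joint_space X k, forall j, fi j (w1 j).1 != 0.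
  suff /fin_all_exists[w1 w1_nz] : forall j, exists t : src_space X k j, fi j t.1 != 0.
    by exists (finfun w1) => j; rewrite ffunE.
  move=> j; have [t _] := exists_src_prob_gt0 j.
  have /existsP[x fx_nz] : [exists x, fi j x != 0].
    apply: contraT => /existsPn fi0; move: mean_nz; rewrite (bigD1 j) //=.
    by rewrite /expect big1 ?mul0r ?eqxx // => x _; rewrite (eqP (negPn (fi0 x))) mulr0.
  by exists (x, t.2).
exists (fun key y => dec (finfun (dfwith (fun j => (w1 j).2) key))
  (finfun (dfwith (fun j => src_obs g (w1 j)) y)) / \prod_(j | j != i) fi j (w1 j).1).
move=> x key; rewrite (decode_dfwith (fun x => \prod_(j < n) fi j (x j)) _ dec_f).
rewrite /joint_src.
rewrite (big_dfwith _ (fun j s => fi j s.1)) mulfK //.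
by apply/prodf_neq0 => j _.
Qed.

End MultiSource.

Theorem theorem2 (R : realFieldType) (n : nat) (X : 'I_n -> finType)
    (p : forall i : 'I_n, X i -> R) (k : 'I_n -> nat) (Y : 'I_n -> eqType)
    (g : forall i : 'I_n, X i -> 'I_(2 ^ k i) -> Y i) :
  (forall i : 'I_n, is_dist (p i)) ->
  (forall (L : nat) (F : 'I_L -> forall i : 'I_n, X i -> R),
     receiver_computes g (fun x => \sum_(l < L) \prod_(i < n) F l i (x i)) ->
     (forall (i : 'I_n) (l : 'I_L), src_secured p g (F l i)) ->
     joint_secured p g (fun x => \sum_(l < L) \prod_(i < n) F l i (x i)))
  /\
  (forall fi : forall i : 'I_n, X i -> R,
     receiver_computes g (fun x => \sum_(i < n) fi i (x i)) ->
     joint_secured p g (fun x => \sum_(i < n) fi i (x i)) ->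
     forall i : 'I_n, src_recoverable g (fi i) /\ src_secured p g (fi i))
  /\
  (forall fi : forall i : 'I_n, X i -> R,
     \prod_(i < n) (src_mean p (fi i) * src_var p (fi i)) != 0 ->
     receiver_computes g (fun x => \prod_(i < n) fi i (x i)) ->
     joint_secured p g (fun x => \prod_(i < n) fi i (x i)) ->
     forall i : 'I_n, src_recoverable g (fi i) /\ src_secured p g (fi i)).
Proof.
move=> p_dist; split; last split.
- by move=> L F _; apply: joint_secured_sum_prod.
- move=> fi computes secured i; split.
    exact: src_recoverable_of_sum.
  exact: src_secured_of_joint_sum.
- move=> fi mean_var_nz computes secured i.
  (* Only the means need to be nonzero. *)
  have mean_nz : \prod_i expect (p i) (fi i) != 0.
    by apply/prodf_neq0 => j _; move/prodf_neq0: mean_var_nz => /(_ j isT);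
      rewrite mulf_eq0 negb_or => /andP[].
  split; first exact: src_recoverable_of_prod.
  exact: src_secured_of_joint_prod.
Qed.
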